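(* Let $q\in(0,1]$. Then $\mathrm{Kaz}(\rho,R(SO_q(3)))=1-\frac{3}{[3]_q}=1-\frac{3}{q^2+q^{-2}+1}$.
   Context: $R(SO_q(3))$ is the fusion algebra with irreducible objects $I=\mathbb{Z}_+$, unit $0$, trivial involution, product $m\cdot n=\sum_{k=|m-n|}^{m+n}k=\sum_kN^k_{m,n}k$, and dimension $d(n)=[2n+1]_q$, where $[x]_q=\frac{q^{-x}-q^x}{q^{-1}-q}$ for $0<q<1$ and $[x]_1=x$. Let $\mathcal{C}_R=\mathbb{C}[I]$ be the complexification; the right regular representation $\rho:\mathcal{C}_R\to B(\ell^2(I))$ is $\rho(m)\delta_n=\sum_kN^k_{n,\bar m}\delta_k$. A finite generating set is a finite $X\subseteq I$ such that every element of $I$ appears with nonzero coefficient in some product of elements of $X$. For a unital $*$-representation $\pi$ and finite generating $X$, $\mathrm{Kaz}(X,\pi,R)=\inf_{\|\xi\|=1}\max_{m\in X}\frac{\|\pi(m)\xi-d(m)\xi\|}{d(m)}$ and $\mathrm{Kaz}(\pi,R)=\inf_X\mathrm{Kaz}(X,\pi,R)$ over finite generating sets. *)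

From Stdlib Require Import Reals List Arith.
From Coquelicot Require Import Coquelicot.
Open Scope R_scope.

Definition qnum (q : R) (x : nat) : R :=
  if Req_EM_T q 1 then INR x else (/ q ^ x - q ^ x) / (/ q - q).

(** dimension function of R(SO_q(3)) : d(n) = [2n+1]_q *)
Definition dimq (q : R) (n : nat) : R := qnum q (2 * n + 1).

(** fusion coefficients N^k_{m,n} = 1 iff |m-n| <= k <= m+n, else 0 *)
Definition Nfus (m n k : nat) : nat :=
  if (Nat.leb (m - n) k && Nat.leb (n - m) k && Nat.leb k (m + n))%bool
  then 1%nat else 0%nat.

(** coefficients of the product of a word w = [m1; ...; mr] of irreducibles
    (the empty product is the unit 0). coef (m :: w) at k =
    sum_j coef w j * N^k_{m,j}  (only j <= k+m contribute). *)
Fixpoint prodcoef (w : list nat) (k : nat) : nat :=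
  match w with
  | nil => if Nat.eqb k 0 then 1%nat else 0%nat
  | m :: w' => fold_right Nat.add 0%nat
                 (map (fun j => prodcoef w' j * Nfus m j k)%nat (seq 0 (S (k + m))))
  end.

Definition generating (X : list nat) : Prop :=
  forall k : nat, exists w : list nat,
    (forall m, In m w -> In m X) /\ (0 < prodcoef w k)%nat.

(** vectors of l^2(I) (I = N), as complex sequences *)
Definition sqnorm (xi : nat -> C) : R := Series (fun n => Cmod (xi n) ^ 2).
Definition l2norm (xi : nat -> C) : R := sqrt (sqnorm xi).
Definition unit_vec (xi : nat -> C) : Prop :=
  ex_series (fun n => Cmod (xi n) ^ 2) /\ l2norm xi = 1.

(** right regular representation: rho(m) delta_n = sum_k N^k_{n, mbar} delta_k,
    with trivial involution mbar = m, so (rho(m) xi)(k) = sum_n N^k_{n,m} xi(n)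
    (only n <= k+m contribute). *)
Definition rho (m : nat) (xi : nat -> C) : nat -> C :=
  fun k => sum_n (fun n => RtoC (INR (Nfus n m k)) * xi n)%C (k + m).

Definition kaz_val (q : R) (X : list nat) (xi : nat -> C) : R :=
  fold_right Rmax 0
    (map (fun m => l2norm (fun k => (rho m xi k - RtoC (dimq q m) * xi k)%C) / dimq q m) X).

Definition Kaz_X (q : R) (X : list nat) : Rbar :=
  Rbar_glb (fun r => exists xi, unit_vec xi /\ r = Finite (kaz_val q X xi)).

Definition Kaz_rho (q : R) : Rbar :=
  Rbar_glb (fun r => exists X, generating X /\ r = Kaz_X q X).

(* Any generating set contains some m >= 1, because products of copies of the unit 0 only
   produce 0.  Each row and each column of the matrix of rho(m) contains at most 2m+1 ones, so
   a Schur-test estimate gives sum_k |xi_k| (rho(m)|xi|)_k <= (2m+1) ||xi||^2.  Writing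
   u = rho(m) xi - d xi and a = d - (2m+1) >= 0, this yields
   ||u||^2 >= 2a <|xi|,|u|> - a^2 ||xi||^2 >= a^2, hence
   ||u|| / d(m) >= 1 - (2m+1)/d(m) >= 1 - 3/d(1); the last step holds because the increments
   d(m+1) - d(m) = q^(2m+2) + q^-(2m+2) grow with m.
   Conversely, the normalised indicator vectors of {0, ..., N-1} are approximate eigenvectors
   of rho(1) for the eigenvalue 3 (only three coordinates are off, each by O(N^-1/2)), so for
   X = {1} the bound is approached as N grows. *)

From Stdlib Require Import Reals Lra Lia List.
From Coquelicot Require Import Coquelicot.
Open Scope R_scope.

Lemma one_sub_sq_neq0 (q : R) : 0 < q -> q <> 1 -> 1 - q * q <> 0.
Proof.
  intros hq hq1 E.
  assert (H : (1 - q) * (1 + q) = 0) by lra.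
  destruct (Rmult_integral _ _ H); lra.
Qed.

Lemma qnum_3 (q : R) : 0 < q -> qnum q 3 = q ^ 2 + / q ^ 2 + 1.
Proof.
  intros hq. unfold qnum. destruct (Req_EM_T q 1) as [->|hq1].
  - simpl. field.
  - pose proof (one_sub_sq_neq0 q hq hq1) as hq2. field. split; [lra | exact hq2].
Qed.

Lemma dimq_0 (q : R) : 0 < q -> dimq q 0 = 1.
Proof.
  intros hq. unfold dimq, qnum. destruct (Req_EM_T q 1) as [_|hq1].
  - simpl. lra.
  - pose proof (one_sub_sq_neq0 q hq hq1) as hq2. simpl. field. split; lra.
Qed.

Lemma dimq_S (q : R) (m : nat) : 0 < q ->
  dimq q (S m) = dimq q m + (q ^ (2 * m + 2) + / q ^ (2 * m + 2)).
Proof.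
  intros hq. unfold dimq, qnum. destruct (Req_EM_T q 1) as [->|hq1].
  - rewrite !pow1, Rinv_1.
    replace (2 * S m + 1)%nat with (2 * m + 1 + 2)%nat by lia.
    rewrite plus_INR. simpl (INR 2). ring.
  - pose proof (one_sub_sq_neq0 q hq hq1) as hq2.
    replace (2 * S m + 1)%nat with (S (S (2 * m + 1))) by lia.
    replace (2 * m + 2)%nat with (S (2 * m + 1)) by lia.
    assert (0 < q ^ (2 * m + 1)) by (apply pow_lt; lra).
    rewrite <- !tech_pow_Rmult. set (p := q ^ (2 * m + 1)) in *.
    field. repeat split; lra.
Qed.

Lemma add_inv_ge_2 (x : R) : 0 < x -> 2 <= x + / x.
Proof.
  intros hx.
  assert (x + / x - 2 = (x - 1) ^ 2 / x) by (field; lra).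
  assert (0 <= (x - 1) ^ 2 / x) by (apply Rdiv_le_0_compat; [apply pow2_ge_0 | lra]).
  lra.
Qed.

Lemma pow_add_inv_le (q : R) (j k : nat) : 0 < q -> q <= 1 -> (j <= k)%nat ->
  q ^ j + / q ^ j <= q ^ k + / q ^ k.
Proof.
  intros hq hq1 hjk.
  assert (hk : 0 < q ^ k) by (apply pow_lt; lra).
  assert (hle1 : forall n, q ^ n <= 1).
  { intros n. rewrite <- (pow1 n). apply pow_incr. lra. }
  assert (hkj : q ^ k <= q ^ j).
  { replace k with (j + (k - j))%nat by lia. rewrite pow_add.
    pose proof (hle1 (k - j)%nat). assert (0 <= q ^ j) by (apply pow_le; lra). nra. }
  pose proof (hle1 j) as hj1.
  set (x := q ^ k) in *. set (y := q ^ j) in *.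
  assert (E : x + / x - (y + / y) = (y - x) * (1 - x * y) / (x * y)) by (field; lra).
  assert (0 <= (y - x) * (1 - x * y) / (x * y)).
  { apply Rdiv_le_0_compat; [apply Rmult_le_pos|]; nra. }
  lra.
Qed.

Lemma dimq_ge_odd (q : R) (m : nat) : 0 < q -> INR (2 * m + 1) <= dimq q m.
Proof.
  intros hq. induction m as [|m IH].
  - rewrite dimq_0 by exact hq. simpl. lra.
  - rewrite dimq_S by exact hq.
    pose proof (add_inv_ge_2 (q ^ (2 * m + 2)) ltac:(apply pow_lt; lra)).
    replace (2 * S m + 1)%nat with (2 * m + 1 + 2)%nat by lia.
    rewrite plus_INR. simpl (INR 2). lra.
Qed.

Lemma dimq_ratio_le (q : R) (m : nat) : 0 < q -> q <= 1 -> (1 <= m)%nat ->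
  INR (2 * m + 1) * dimq q 1 <= 3 * dimq q m.
Proof.
  intros hq hq1 hm. induction hm as [|m hm IH].
  - simpl. lra.
  - assert (hd1 : dimq q 1 = 1 + (q ^ 2 + / q ^ 2)).
    { rewrite dimq_S, dimq_0 by exact hq. reflexivity. }
    pose proof (add_inv_ge_2 (q ^ 2) ltac:(apply pow_lt; lra)).
    pose proof (pow_add_inv_le q 2 (2 * m + 2) hq hq1 ltac:(lia)).
    rewrite (dimq_S q m) by exact hq.
    replace (2 * S m + 1)%nat with (2 * m + 1 + 2)%nat by lia.
    rewrite plus_INR, Rmult_plus_distr_r. simpl (INR 2). lra.
Qed.

Lemma sum_n_RS (a : nat -> R) (N : nat) : sum_n a (S N) = sum_n a N + a (S N) :> R.
Proof. exact (sum_Sn a N). Qed.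

Lemma sum_n_Rle (a b : nat -> R) (N : nat) :
  (forall n, (n <= N)%nat -> a n <= b n) -> sum_n a N <= sum_n b N.
Proof. rewrite !sum_n_Reals. apply sum_Rle. Qed.

Lemma sum_n_nonneg (a : nat -> R) (N : nat) :
  (forall n, (n <= N)%nat -> 0 <= a n) -> 0 <= sum_n a N.
Proof.
  intros ha. rewrite <- (Rmult_0_r (INR (S N))), <- sum_n_const.
  apply sum_n_Rle. exact ha.
Qed.

Lemma sum_n_Rmult_l (c : R) (a : nat -> R) (N : nat) :
  sum_n (fun n => c * a n) N = c * sum_n a N :> R.
Proof. exact (sum_n_mult_l c a N). Qed.

Lemma sum_n_Rplus (a b : nat -> R) (N : nat) :
  sum_n (fun n => a n + b n) N = sum_n a N + sum_n b N :> R.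
Proof. exact (sum_n_plus a b N). Qed.

Lemma sum_n_Rle_mono (a : nat -> R) (N M : nat) :
  (forall n, 0 <= a n) -> (N <= M)%nat -> sum_n a N <= sum_n a M.
Proof.
  intros ha hNM. induction hNM as [|M hNM IH]; [lra|].
  rewrite sum_n_RS. specialize (ha (S M)). lra.
Qed.

Lemma sum_n_zero_tail (a : nat -> R) (N M : nat) : (N <= M)%nat ->
  (forall n, (N < n <= M)%nat -> a n = 0) -> sum_n a M = sum_n a N :> R.
Proof.
  intros hNM. induction hNM as [|M hNM IH]; intros ha; [reflexivity|].
  rewrite sum_n_RS, ha by lia. rewrite IH by (intros; apply ha; lia). ring.
Qed.

Lemma sum_n_RtoC (a : nat -> R) (N : nat) :
  sum_n (fun n => RtoC (a n)) N = RtoC (sum_n a N).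
Proof.
  induction N as [|N IH]; [rewrite !sum_O; reflexivity|].
  rewrite !sum_Sn, IH. symmetry. apply RtoC_plus.
Qed.

Lemma Cmod_RtoC_sq (r : R) : Cmod (RtoC r) ^ 2 = r ^ 2.
Proof. rewrite Cmod_R. apply pow2_abs. Qed.

Lemma Cmod_sum_n_le (a : nat -> C) (N : nat) :
  Cmod (sum_n a N) <= sum_n (fun n => Cmod (a n)) N.
Proof.
  induction N as [|N IH]; [rewrite !sum_O; lra|].
  rewrite sum_Sn, sum_n_RS. eapply Rle_trans; [apply Cmod_triangle|]. lra.
Qed.

Lemma sum_n_weighted_sq_le (w x : nat -> R) (c : R) (N : nat) :
  0 < c -> (forall n, 0 <= w n) -> sum_n w N <= c ->
  (sum_n (fun n => w n * x n) N) ^ 2 <= c * sum_n (fun n => w n * x n ^ 2) N.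
Proof.
  intros hc hw hsum. set (B := sum_n (fun n => w n * x n) N).
  (* AM-GM termwise: [2 (c x) B <= (c x)^2 + B^2] *)
  assert (H : c * B ^ 2 <= c ^ 2 / 2 * sum_n (fun n => w n * x n ^ 2) N + B ^ 2 / 2 * sum_n w N).
  { replace (c * B ^ 2) with (c * B * B) by ring.
    unfold B at 2. rewrite <- sum_n_Rmult_l, <- !sum_n_Rmult_l, <- sum_n_Rplus.
    apply sum_n_Rle. intros n _. pose proof (hw n).
    pose proof (pow2_ge_0 (c * x n - B)). nra. }
  assert (0 <= B ^ 2) by apply pow2_ge_0.
  apply (Rmult_le_reg_l c); [exact hc|]. nra.
Qed.

Lemma is_series_finite_support (a : nat -> R) (M : nat) :
  (forall n, (M < n)%nat -> a n = 0) -> is_series a (sum_n a M).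
Proof.
  intros ha.
  assert (hlim : is_lim_seq (sum_n a) (sum_n a M)).
  { apply (is_lim_seq_ext_loc (fun _ => sum_n a M)); [|apply is_lim_seq_const].
    exists M. intros n hn. symmetry. apply sum_n_zero_tail; [exact hn|].
    intros k hk. apply ha. lia. }
  exact hlim.
Qed.

Definition ind (lo hi n : nat) : nat :=
  if (Nat.leb lo n && Nat.leb n hi)%bool then 1%nat else 0%nat.

Lemma sum_n_ind (lo hi K : nat) :
  sum_n (fun n => INR (ind lo hi n)) K =
  INR (if Nat.ltb K lo then 0 else Nat.min K hi + 1 - lo) :> R.
Proof.
  induction K as [|K IH].
  - rewrite sum_O. unfold ind. destruct lo; reflexivity.
  - rewrite sum_n_RS, IH, <- plus_INR. f_equal. unfold ind.
    destruct (Nat.ltb_spec K lo), (Nat.ltb_spec (S K) lo), (Nat.leb_spec lo (S K)),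
      (Nat.leb_spec (S K) hi); cbn [andb]; lia.
Qed.

Lemma sum_n_ind_le (lo hi K : nat) :
  sum_n (fun n => INR (ind lo hi n)) K <= INR (hi + 1 - lo).
Proof.
  rewrite sum_n_ind. apply le_INR. destruct (Nat.ltb_spec K lo); lia.
Qed.

Ltac Nfus_cases :=
  unfold Nfus, ind;
  repeat match goal with
         | |- context [Nat.leb ?a ?b] => destruct (Nat.leb_spec a b)
         end;
  cbn [andb]; lia.

Lemma Nfus_le_ind_row (n m k : nat) : (Nfus n m k <= ind (k - m) (k + m) n)%nat.
Proof. Nfus_cases. Qed.

Lemma Nfus_le_ind_col (n m k : nat) : (Nfus n m k <= ind (n - m) (n + m) k)%nat.
Proof. Nfus_cases. Qed.

Lemma Nfus_band (n m k : nat) : (k + m < n)%nat -> Nfus n m k = 0%nat.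
Proof. intros. Nfus_cases. Qed.

Lemma Nfus_1 (n k : nat) : (1 <= k)%nat -> Nfus n 1 k = ind (k - 1) (k + 1) n.
Proof. intros. Nfus_cases. Qed.

Lemma Nfus_row_sum_le (m k K : nat) :
  sum_n (fun n => INR (Nfus n m k)) K <= INR (2 * m + 1).
Proof.
  eapply Rle_trans; [apply sum_n_Rle; intros; apply le_INR, Nfus_le_ind_row|].
  eapply Rle_trans; [apply sum_n_ind_le|]. apply le_INR. lia.
Qed.

Lemma Nfus_col_sum_le (m n K : nat) :
  sum_n (fun k => INR (Nfus n m k)) K <= INR (2 * m + 1).
Proof.
  eapply Rle_trans; [apply sum_n_Rle; intros; apply le_INR, Nfus_le_ind_col|].
  eapply Rle_trans; [apply sum_n_ind_le|]. apply le_INR. lia.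
Qed.

Section BandedKernel.

Variables (w : nat -> nat -> R) (c : R) (m : nat).
Hypothesis w_nonneg : forall n k, 0 <= w n k.
Hypothesis w_band : forall n k, (k + m < n)%nat -> w n k = 0.
Hypothesis w_row_sum : forall k K, sum_n (fun n => w n k) K <= c.
Hypothesis w_col_sum : forall n K, sum_n (fun k => w n k) K <= c.

Lemma kernel_sum_le (z : nat -> R) (K : nat) : (forall n, 0 <= z n) ->
  sum_n (fun k => sum_n (fun n => w n k * z n) (k + m)) K <= c * sum_n z (K + m).
Proof.
  intros hz.
  rewrite (sum_n_ext_loc _ (fun k => sum_n (fun n => w n k * z n) (K + m))).
  2:{ intros k hk. symmetry. apply sum_n_zero_tail; [lia|].
      intros n hn. rewrite w_band by lia. ring. }
  rewrite (sum_n_switch (fun k n => w n k * z n)), <- sum_n_Rmult_l.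
  apply sum_n_Rle. intros n _.
  rewrite (sum_n_ext _ (fun k => z n * w n k)) by (intros; apply Rmult_comm).
  rewrite sum_n_Rmult_l, Rmult_comm.
  apply Rmult_le_compat_r; [apply hz | apply w_col_sum].
Qed.

Lemma kernel_bilinear_le (y : nat -> R) (K : nat) :
  sum_n (fun k => y k * sum_n (fun n => w n k * y n) (k + m)) K <=
  c / 2 * (sum_n (fun n => y n ^ 2) K + sum_n (fun n => y n ^ 2) (K + m)).
Proof.
  assert (hpt : forall k, y k * sum_n (fun n => w n k * y n) (k + m) <=
                  c / 2 * y k ^ 2 + / 2 * sum_n (fun n => w n k * y n ^ 2) (k + m)).
  { intros k. rewrite <- !sum_n_Rmult_l.
    eapply Rle_trans.
    - apply (sum_n_Rle _ (fun n => y k ^ 2 / 2 * w n k + / 2 * (w n k * y n ^ 2))).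
      intros n _. pose proof (w_nonneg n k). pose proof (pow2_ge_0 (y k - y n)). nra.
    - rewrite sum_n_Rplus, !sum_n_Rmult_l.
      pose proof (w_row_sum k (k + m)). pose proof (pow2_ge_0 (y k)). nra. }
  eapply Rle_trans; [apply sum_n_Rle; intros k _; apply hpt|].
  rewrite sum_n_Rplus, !sum_n_Rmult_l.
  pose proof (kernel_sum_le (fun n => y n ^ 2) K (fun n => pow2_ge_0 (y n))).
  lra.
Qed.

Hypothesis c_pos : 0 < c.

Lemma kernel_sq_sum_le (y : nat -> R) (K : nat) :
  sum_n (fun k => (sum_n (fun n => w n k * y n) (k + m)) ^ 2) K <=
  c ^ 2 * sum_n (fun n => y n ^ 2) (K + m).
Proof.
  eapply Rle_trans.
  - apply sum_n_Rle. intros k _.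
    apply (sum_n_weighted_sq_le (fun n => w n k) y c (k + m) c_pos).
    + intros n. apply w_nonneg.
    + apply w_row_sum.
  - rewrite sum_n_Rmult_l.
    pose proof (kernel_sum_le (fun n => y n ^ 2) K (fun n => pow2_ge_0 (y n))) as hsum.
    replace (c ^ 2) with (c * c) by ring. rewrite Rmult_assoc.
    apply Rmult_le_compat_l; [lra | exact hsum].
Qed.

End BandedKernel.

Definition sqnorm_upto (xi : nat -> C) (K : nat) : R := sum_n (fun n => Cmod (xi n) ^ 2) K.

Lemma unit_vec_sqnorm_upto (xi : nat -> C) : unit_vec xi ->
  is_lim_seq (sqnorm_upto xi) 1 /\ forall K, sqnorm_upto xi K <= 1.
Proof.
  intros [hex hnorm]. unfold l2norm, sqnorm in hnorm.
  assert (hS : Series (fun n => Cmod (xi n) ^ 2) = 1).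
  { destruct (Rle_or_lt 0 (Series (fun n => Cmod (xi n) ^ 2))) as [h|h].
    - rewrite <- (sqrt_sqrt _ h), hnorm. ring.
    - rewrite sqrt_neg_0 in hnorm; lra. }
  assert (hlim : is_lim_seq (sqnorm_upto xi) 1).
  { pose proof (Series_correct _ hex) as hser. rewrite hS in hser. exact hser. }
  split; [exact hlim|].
  intros K. apply (is_lim_seq_incr_compare _ 1 hlim).
  intros n. apply sum_n_Rle_mono; [intros; apply pow2_ge_0 | lia].
Qed.

Lemma Series_ge_of_minorant (a lo : nat -> R) (B L : R) :
  (forall n, 0 <= a n) -> (forall K, sum_n a K <= B) ->
  (forall K, lo K <= sum_n a K) -> is_lim_seq lo L -> L <= Series a.
Proof.
  intros ha hB hlo hL.
  destruct (ex_finite_lim_seq_incr (sum_n a) B) as [l hl].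
  - intros K. rewrite sum_n_RS. specialize (ha (S K)). lra.
  - exact hB.
  - rewrite (is_series_unique a l hl).
    exact (is_lim_seq_le lo (sum_n a) L l hlo hL hl).
Qed.

Definition rho_abs (m : nat) (xi : nat -> C) (k : nat) : R :=
  sum_n (fun n => INR (Nfus n m k) * Cmod (xi n)) (k + m).

Lemma Cmod_rho_le (m : nat) (xi : nat -> C) (k : nat) : Cmod (rho m xi k) <= rho_abs m xi k.
Proof.
  unfold rho. eapply Rle_trans; [apply Cmod_sum_n_le|].
  apply sum_n_Rle. intros n _.
  rewrite Cmod_mult, Cmod_R, Rabs_pos_eq by apply pos_INR. lra.
Qed.

Lemma rho_abs_bilinear_le (m : nat) (xi : nat -> C) (K : nat) :
  sum_n (fun k => Cmod (xi k) * rho_abs m xi k) K <=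
  INR (2 * m + 1) / 2 * (sqnorm_upto xi K + sqnorm_upto xi (K + m)).
Proof.
  exact (kernel_bilinear_le (fun n k => INR (Nfus n m k)) _ m
           (fun n k => pos_INR _) (fun n k h => f_equal INR (Nfus_band n m k h))
           (Nfus_row_sum_le m) (Nfus_col_sum_le m) (fun n => Cmod (xi n)) K).
Qed.

Lemma rho_abs_sq_sum_le (m : nat) (xi : nat -> C) (K : nat) :
  sum_n (fun k => rho_abs m xi k ^ 2) K <= INR (2 * m + 1) ^ 2 * sqnorm_upto xi (K + m).
Proof.
  exact (kernel_sq_sum_le (fun n k => INR (Nfus n m k)) _ m
           (fun n k => pos_INR _) (fun n k h => f_equal INR (Nfus_band n m k h))
           (Nfus_row_sum_le m) (Nfus_col_sum_le m) ltac:(apply lt_0_INR; lia)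
           (fun n => Cmod (xi n)) K).
Qed.

Section ShiftedRho.

Variables (m : nat) (d : R) (xi : nat -> C).
Let c := INR (2 * m + 1).
Let a := d - c.
Let u (k : nat) : C := (rho m xi k - RtoC d * xi k)%C.
Hypothesis c_le_d : c <= d.

Lemma Cmod_rho_sub_bounds (k : nat) :
  d * Cmod (xi k) - rho_abs m xi k <= Cmod (u k) <= rho_abs m xi k + d * Cmod (xi k).
Proof.
  assert (hd0 : 0 <= d) by (apply (Rle_trans _ c); [apply pos_INR | exact c_le_d]).
  pose proof (Cmod_rho_le m xi k) as hrho.
  assert (hd : Cmod (RtoC d * xi k) = d * Cmod (xi k)).
  { rewrite Cmod_mult, Cmod_R, Rabs_pos_eq by lra. reflexivity. }
  split.
  - assert (E : (RtoC d * xi k = rho m xi k + - u k)%C) by (unfold u; ring).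
    pose proof (Cmod_triangle (rho m xi k) (- u k)) as ht.
    rewrite <- E, Cmod_opp, hd in ht. lra.
  - unfold u, Cminus. eapply Rle_trans; [apply Cmod_triangle|].
    rewrite Cmod_opp, hd. lra.
Qed.

Lemma sqnorm_upto_rho_sub_le : (forall K, sqnorm_upto xi K <= 1) ->
  forall K, sqnorm_upto u K <= 2 * c ^ 2 + 2 * d ^ 2.
Proof.
  intros hle1 K.
  eapply Rle_trans.
  - apply (sum_n_Rle _ (fun k => 2 * rho_abs m xi k ^ 2 + 2 * d ^ 2 * Cmod (xi k) ^ 2)).
    intros k _. pose proof (Cmod_rho_sub_bounds k). pose proof (Cmod_ge_0 (u k)).
    pose proof (pow2_ge_0 (rho_abs m xi k - d * Cmod (xi k))). nra.
  - rewrite sum_n_Rplus, !sum_n_Rmult_l.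
    pose proof (rho_abs_sq_sum_le m xi K) as hsq. fold c in hsq.
    assert (c ^ 2 * sqnorm_upto xi (K + m) <= c ^ 2 * 1)
      by (apply Rmult_le_compat_l; [apply pow2_ge_0 | apply hle1]).
    assert (d ^ 2 * sqnorm_upto xi K <= d ^ 2 * 1)
      by (apply Rmult_le_compat_l; [apply pow2_ge_0 | apply hle1]).
    unfold sqnorm_upto in *. lra.
Qed.

Lemma sqnorm_upto_rho_sub_ge (K : nat) :
  (2 * a * d - a ^ 2) * sqnorm_upto xi K - a * c * (sqnorm_upto xi K + sqnorm_upto xi (K + m))
  <= sqnorm_upto u K.
Proof.
  assert (ha : 0 <= a) by (unfold a; lra).
  (* [|u|^2 >= 2 a |xi| |u| - a^2 |xi|^2], then [|u| >= d |xi| - rho_abs] *)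
  eapply Rle_trans; cycle 1.
  - apply (sum_n_Rle (fun k => (2 * a * d - a ^ 2) * Cmod (xi k) ^ 2
                               + - (2 * a) * (Cmod (xi k) * rho_abs m xi k))).
    intros k _. pose proof (Cmod_rho_sub_bounds k). pose proof (Cmod_ge_0 (xi k)).
    pose proof (pow2_ge_0 (Cmod (u k) - a * Cmod (xi k))).
    assert (a * Cmod (xi k) * (d * Cmod (xi k) - rho_abs m xi k)
            <= a * Cmod (xi k) * Cmod (u k)) by (apply Rmult_le_compat_l; nra).
    nra.
  - rewrite sum_n_Rplus, !sum_n_Rmult_l.
    pose proof (rho_abs_bilinear_le m xi K) as hbil. fold c in hbil.
    assert (2 * a * sum_n (fun k => Cmod (xi k) * rho_abs m xi k) K <=
            2 * a * (c / 2 * (sqnorm_upto xi K + sqnorm_upto xi (K + m))))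
      by (apply Rmult_le_compat_l; [lra | exact hbil]).
    unfold sqnorm_upto in *. lra.
Qed.

End ShiftedRho.

Lemma l2norm_rho_sub_ge (m : nat) (d : R) (xi : nat -> C) :
  unit_vec xi -> INR (2 * m + 1) <= d ->
  d - INR (2 * m + 1) <= l2norm (fun k => (rho m xi k - RtoC d * xi k)%C).
Proof.
  intros hxi hd. destruct (unit_vec_sqnorm_upto xi hxi) as [hlim hle1].
  set (c := INR (2 * m + 1)) in *. set (a := d - c).
  assert (hlo : is_lim_seq
                  (fun K => (2 * a * d - a ^ 2) * sqnorm_upto xi K
                            - a * c * (sqnorm_upto xi K + sqnorm_upto xi (K + m)))
                  ((2 * a * d - a ^ 2) * 1 - a * c * (1 + 1))).
  { apply is_lim_seq_minus'; apply is_lim_seq_mult'; try apply is_lim_seq_const.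
    - exact hlim.
    - apply is_lim_seq_plus'; [exact hlim|].
      apply (is_lim_seq_incr_n (sqnorm_upto xi) m 1), hlim. }
  replace ((2 * a * d - a ^ 2) * 1 - a * c * (1 + 1)) with (a ^ 2) in hlo by (unfold a; ring).
  unfold l2norm, sqnorm.
  rewrite <- (sqrt_pow2 a) by (unfold a; lra). apply sqrt_le_1_alt.
  apply (Series_ge_of_minorant _ _ _ _ (fun k => pow2_ge_0 _)
           (sqnorm_upto_rho_sub_le m d xi hd hle1) (sqnorm_upto_rho_sub_ge m d xi hd) hlo).
Qed.

Lemma kaz_term_ge (q : R) (m : nat) (xi : nat -> C) :
  0 < q -> q <= 1 -> (1 <= m)%nat -> unit_vec xi ->
  1 - 3 / qnum q 3 <= l2norm (fun k => (rho m xi k - RtoC (dimq q m) * xi k)%C) / dimq q m.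
Proof.
  intros hq hq1 hm hxi.
  pose proof (dimq_ge_odd q m hq) as hd.
  pose proof (l2norm_rho_sub_ge m (dimq q m) xi hxi hd) as hnorm.
  pose proof (dimq_ratio_le q m hq hq1 hm) as hratio.
  pose proof (dimq_ge_odd q 1 hq) as hd1.
  change (dimq q 1) with (qnum q 3) in hratio, hd1.
  set (d := dimq q m) in *. set (D := qnum q 3) in *. set (c := INR (2 * m + 1)) in *.
  assert (hc : 0 < c) by (apply lt_0_INR; lia).
  assert (hD : 3 <= D) by (simpl in hd1; lra).
  assert (E : (d - c) / d - (1 - 3 / D) = (3 * d - c * D) / (d * D)) by (field; lra).
  assert (0 <= (3 * d - c * D) / (d * D)) by (apply Rdiv_le_0_compat; nra).
  apply (Rle_trans _ ((d - c) / d)); [lra|].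
  apply Rmult_le_compat_r; [apply Rlt_le, Rinv_0_lt_compat; lra | exact hnorm].
Qed.

Lemma list_sum_map_zero {A : Type} (f : A -> nat) (l : list A) :
  (forall x, In x l -> f x = 0%nat) -> list_sum (map f l) = 0%nat.
Proof.
  induction l as [|a l IH]; intros hf; [reflexivity|].
  simpl. rewrite hf, IH by (auto with datatypes). reflexivity.
Qed.

Lemma list_sum_map_ge {A : Type} (f : A -> nat) (l : list A) (x : A) :
  In x l -> (f x <= list_sum (map f l))%nat.
Proof.
  induction l as [|a l IH]; intros hx; [contradiction|].
  destruct hx as [<-|hx]; simpl; [lia|]. specialize (IH hx). lia.
Qed.

Lemma prodcoef_cons_0 (w : list nat) (k : nat) : prodcoef (0%nat :: w) k = prodcoef w k.
Proof.
  change (list_sum (map (fun j => prodcoef w j * Nfus 0 j k) (seq 0 (S (k + 0))))%nat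
          = prodcoef w k).
  rewrite Nat.add_0_r, seq_S, map_app, list_sum_app, list_sum_map_zero.
  - simpl. replace (Nfus 0 k k) with 1%nat by Nfus_cases. lia.
  - intros j hj. apply in_seq in hj.
    replace (Nfus 0 j k) with 0%nat by Nfus_cases. lia.
Qed.

Lemma prodcoef_pos_has_pos (w : list nat) (k : nat) :
  (1 <= k)%nat -> (0 < prodcoef w k)%nat -> exists m, In m w /\ (1 <= m)%nat.
Proof.
  intros hk. induction w as [|[|m] w IH]; intros hpos.
  - simpl in hpos. destruct k; [lia | simpl in hpos; lia].
  - rewrite prodcoef_cons_0 in hpos. destruct (IH hpos) as [m [hm hm1]].
    exists m. split; [right; exact hm | exact hm1].
  - exists (S m). split; [left; reflexivity | lia].
Qed.

Lemma generating_has_pos (X : list nat) : generating X -> exists m, In m X /\ (1 <= m)%nat.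
Proof.
  intros hX. destruct (hX 1%nat) as [w [hwX hpos]].
  destruct (prodcoef_pos_has_pos w 1 (le_n 1) hpos) as [m [hm hm1]].
  exists m. split; [apply hwX, hm | exact hm1].
Qed.

Lemma prodcoef_repeat_1_pos (k : nat) : (0 < prodcoef (repeat 1%nat k) k)%nat.
Proof.
  induction k as [|k IH]; [simpl; lia|].
  change (0 < list_sum (map (fun j => prodcoef (repeat 1%nat k) j * Nfus 1 j (S k))
                          (seq 0 (S (S k + 1)))))%nat.
  eapply Nat.lt_le_trans; [|apply (list_sum_map_ge _ _ k), in_seq; lia].
  cbv beta. replace (Nfus 1 k (S k)) with 1%nat by Nfus_cases. lia.
Qed.

Lemma generating_1 : generating (1%nat :: nil).
Proof.
  intros k. exists (repeat 1%nat k). split.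
  - intros m hm. apply repeat_spec in hm. left. symmetry. exact hm.
  - apply prodcoef_repeat_1_pos.
Qed.

Lemma fold_Rmax_map_ge {A : Type} (f : A -> R) (l : list A) (x : A) :
  In x l -> f x <= fold_right Rmax 0 (map f l).
Proof.
  induction l as [|a l IH]; intros hx; [contradiction|].
  simpl. destruct hx as [<-|hx]; [apply Rmax_l|].
  eapply Rle_trans; [apply IH, hx | apply Rmax_r].
Qed.

Lemma kaz_val_ge (q : R) (X : list nat) (xi : nat -> C) :
  0 < q -> q <= 1 -> generating X -> unit_vec xi -> 1 - 3 / qnum q 3 <= kaz_val q X xi.
Proof.
  intros hq hq1 hX hxi. destruct (generating_has_pos X hX) as [m [hm hm1]].
  eapply Rle_trans; [apply (kaz_term_ge q m xi hq hq1 hm1 hxi)|].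
  apply (fold_Rmax_map_ge
           (fun m => l2norm (fun k => (rho m xi k - RtoC (dimq q m) * xi k)%C) / dimq q m)).
  exact hm.
Qed.

Section BoxVector.

Variable N : nat.
Hypothesis N_ge_2 : (2 <= N)%nat.

Let s := / sqrt (INR N).

Definition box (n : nat) : R := if Nat.ltb n N then s else 0.

Definition box_image (k : nat) : R := sum_n (fun n => INR (Nfus n 1 k) * box n) (k + 1).

Lemma box_height_pos : 0 < s.
Proof. apply Rinv_0_lt_compat, sqrt_lt_R0, lt_0_INR. lia. Qed.

Lemma box_height_sq : s ^ 2 = / INR N.
Proof.
  assert (0 < INR N) by (apply lt_0_INR; lia).
  unfold s. rewrite pow_inv, <- Rsqr_pow2, Rsqr_sqrt by lra. reflexivity.
Qed.

Lemma box_cases (n : nat) : box n = s \/ box n = 0.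
Proof. unfold box. destruct (Nat.ltb n N); auto. Qed.

Lemma box_unit : unit_vec (fun n => RtoC (box n)).
Proof.
  assert (hsum : sum_n (fun n => Cmod (RtoC (box n)) ^ 2) (N - 1) = 1).
  { rewrite (sum_n_ext_loc _ (fun _ => s ^ 2)).
    - rewrite sum_n_const. replace (S (N - 1)) with N by lia.
      rewrite box_height_sq. apply Rinv_r. apply not_0_INR. lia.
    - intros n hn. rewrite Cmod_RtoC_sq. unfold box.
      destruct (Nat.ltb_spec n N); [reflexivity | lia]. }
  assert (hser : is_series (fun n => Cmod (RtoC (box n)) ^ 2) 1).
  { rewrite <- hsum. apply is_series_finite_support.
    intros n hn. rewrite Cmod_RtoC_sq. unfold box.
    destruct (Nat.ltb_spec n N); [lia | ring]. }
  split; [exists 1; exact hser|].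
  unfold l2norm, sqnorm. rewrite (is_series_unique _ _ hser). apply sqrt_1.
Qed.

Lemma rho_1_box (k : nat) : rho 1 (fun n => RtoC (box n)) k = RtoC (box_image k).
Proof.
  unfold rho, box_image. rewrite <- sum_n_RtoC. apply sum_n_ext. intros n.
  symmetry. apply RtoC_mult.
Qed.

Lemma box_image_bounds (k : nat) : 0 <= box_image k <= 3 * s.
Proof.
  pose proof box_height_pos. split.
  - apply sum_n_nonneg. intros n _. apply Rmult_le_pos; [apply pos_INR|].
    destruct (box_cases n) as [-> | ->]; lra.
  - eapply Rle_trans.
    + apply (sum_n_Rle _ (fun n => s * INR (Nfus n 1 k))). intros n _.
      pose proof (pos_INR (Nfus n 1 k)). destruct (box_cases n) as [-> | ->]; nra.
    + rewrite sum_n_Rmult_l. pose proof (Nfus_row_sum_le 1 k (k + 1)) as hrow.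
      simpl in hrow. nra.
Qed.

Lemma box_image_interior (k : nat) : (1 <= k)%nat -> (k + 2 <= N)%nat -> box_image k = 3 * s.
Proof.
  intros hk1 hkN. unfold box_image.
  rewrite (sum_n_ext_loc _ (fun n => s * INR (ind (k - 1) (k + 1) n))).
  - rewrite sum_n_Rmult_l, sum_n_ind.
    destruct (Nat.ltb_spec (k + 1) (k - 1)); [lia|].
    replace (Nat.min (k + 1) (k + 1) + 1 - (k - 1))%nat with 3%nat by lia.
    simpl. ring.
  - intros n hn. rewrite Nfus_1 by exact hk1. unfold box.
    destruct (Nat.ltb_spec n N); [apply Rmult_comm | lia].
Qed.

Lemma box_image_far (k : nat) : (N < k)%nat -> box_image k = 0.
Proof.
  intros hk. unfold box_image.
  rewrite (sum_n_ext_loc _ (fun _ => 0)).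
  - rewrite sum_n_const. ring.
  - intros n hn. unfold box. destruct (Nat.ltb_spec n N); [|apply Rmult_0_r].
    pose proof (Nfus_le_ind_row n 1 k) as hle. unfold ind in hle.
    destruct (Nat.leb_spec (k - 1) n); [lia|].
    replace (Nfus n 1 k) with 0%nat by (cbn [andb] in hle; lia). apply Rmult_0_l.
Qed.

Lemma box_defect_term_le (e : R) (k : nat) : 3 <= e -> (k <= N)%nat ->
  (box_image k - e * box k) ^ 2 <=
  s ^ 2 * (e - 3) ^ 2 + s ^ 2 * (3 + e) ^ 2 * INR (ind 0 0 k + ind (N - 1) N k).
Proof.
  intros he hkN. pose proof box_height_pos as hs.
  assert (hI : 0 <= INR (ind 0 0 k + ind (N - 1) N k)) by apply pos_INR.
  assert (h1 : 0 <= s ^ 2 * (e - 3) ^ 2) by (apply Rmult_le_pos; apply pow2_ge_0).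
  assert (h2 : 0 <= s ^ 2 * (3 + e) ^ 2) by (apply Rmult_le_pos; apply pow2_ge_0).
  assert (hcase : ((1 <= k)%nat /\ (k + 2 <= N)%nat) \/ (1 <= ind 0 0 k + ind (N - 1) N k)%nat).
  { unfold ind. destruct (Nat.leb_spec 0 k), (Nat.leb_spec k 0),
      (Nat.leb_spec (N - 1) k), (Nat.leb_spec k N); cbn [andb]; lia. }
  destruct hcase as [[hk1 hk2] | hbd].
  - rewrite box_image_interior by assumption. unfold box.
    destruct (Nat.ltb_spec k N); [|lia].
    assert (0 <= s ^ 2 * (3 + e) ^ 2 * INR (ind 0 0 k + ind (N - 1) N k))
      by (apply Rmult_le_pos; assumption).
    replace ((3 * s - e * s) ^ 2) with (s ^ 2 * (e - 3) ^ 2) by ring. lra.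
  - apply le_INR in hbd. simpl in hbd.
    assert (s ^ 2 * (3 + e) ^ 2 <= s ^ 2 * (3 + e) ^ 2 * INR (ind 0 0 k + ind (N - 1) N k))
      by (rewrite <- (Rmult_1_r (s ^ 2 * (3 + e) ^ 2)) at 1; apply Rmult_le_compat_l; assumption).
    assert ((box_image k - e * box k) ^ 2 <= s ^ 2 * (3 + e) ^ 2).
    { replace (s ^ 2 * (3 + e) ^ 2) with ((3 * s + e * s) ^ 2) by ring.
      assert (hrange : - (3 * s + e * s) <= box_image k - e * box k <= 3 * s + e * s).
      { pose proof (box_image_bounds k). destruct (box_cases k) as [-> | ->]; nra. }
      rewrite <- !Rsqr_pow2. apply Rsqr_bounds_le, hrange. }
    lra.
Qed.

Lemma box_defect_sum_le (e : R) : 3 <= e ->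
  sum_n (fun k => (box_image k - e * box k) ^ 2) N <=
  (e - 3) ^ 2 + ((e - 3) ^ 2 + 3 * (3 + e) ^ 2) / INR N.
Proof.
  intros he.
  eapply Rle_trans; [apply sum_n_Rle; intros k hk; apply box_defect_term_le; assumption|].
  rewrite sum_n_Rplus, sum_n_const, sum_n_Rmult_l.
  rewrite (sum_n_ext _ (fun k => INR (ind 0 0 k) + INR (ind (N - 1) N k)))
    by (intros; apply plus_INR).
  rewrite sum_n_Rplus, !sum_n_ind.
  replace (if (N <? 0)%nat then 0%nat else (Nat.min N 0 + 1 - 0)%nat) with 1%nat
    by (destruct (Nat.ltb_spec N 0); lia).
  replace (if (N <? N - 1)%nat then 0%nat else (Nat.min N N + 1 - (N - 1))%nat) with 2%nat
    by (destruct (Nat.ltb_spec N (N - 1)); lia).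
  rewrite S_INR, box_height_sq.
  assert (0 < INR N) by (apply lt_0_INR; lia).
  apply Req_le. simpl. field. lra.
Qed.

Lemma box_defect_l2norm_sq_le (e : R) : 3 <= e ->
  l2norm (fun k => (rho 1 (fun n => RtoC (box n)) k - RtoC e * RtoC (box k))%C) ^ 2 <=
  (e - 3) ^ 2 + ((e - 3) ^ 2 + 3 * (3 + e) ^ 2) / INR N.
Proof.
  intros he.
  assert (hterm : forall k, Cmod (rho 1 (fun n => RtoC (box n)) k - RtoC e * RtoC (box k))%C ^ 2
                            = (box_image k - e * box k) ^ 2).
  { intros k. rewrite rho_1_box, <- RtoC_mult, <- RtoC_minus. apply Cmod_RtoC_sq. }
  assert (hsupp : forall k, (N < k)%nat -> (box_image k - e * box k) ^ 2 = 0).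
  { intros k hk. rewrite box_image_far by exact hk. unfold box.
    destruct (Nat.ltb_spec k N); [lia | ring]. }
  unfold l2norm, sqnorm.
  rewrite (Series_ext _ _ hterm), (is_series_unique _ _ (is_series_finite_support _ N hsupp)).
  rewrite pow2_sqrt by (apply sum_n_nonneg; intros; apply pow2_ge_0).
  apply box_defect_sum_le, he.
Qed.

End BoxVector.

Lemma kaz_val_1_approx (q eps : R) : 0 < q -> 0 < eps ->
  exists xi, unit_vec xi /\ kaz_val q (1%nat :: nil) xi < 1 - 3 / qnum q 3 + eps.
Proof.
  intros hq heps.
  pose proof (dimq_ge_odd q 1 hq) as hd1. change (dimq q 1) with (qnum q 3) in hd1.
  set (e := qnum q 3) in *. assert (he : 3 <= e) by (simpl in hd1; lra).
  set (delta := eps * e). assert (hdelta : 0 < delta) by (unfold delta; nra).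
  set (B := (e - 3) ^ 2 + 3 * (3 + e) ^ 2).
  destruct (INR_unbounded (B / delta ^ 2)) as [n hn].
  set (N := (n + 2)%nat). assert (hN : (2 <= N)%nat) by (unfold N; lia).
  assert (hBN : B / INR N < delta ^ 2).
  { assert (INR n <= INR N) by (apply le_INR; unfold N; lia).
    assert (0 < delta ^ 2) by (apply pow_lt; exact hdelta).
    assert (0 < INR N) by (apply lt_0_INR; lia).
    apply Rlt_div_l; [lra|]. apply Rlt_div_l in hn; [|lra]. nra. }
  exists (fun k => RtoC (box N k)). split; [apply box_unit, hN|].
  pose proof (box_defect_l2norm_sq_le N hN e he) as hsq.
  fold B in hsq. set (l := l2norm _) in hsq.
  assert (hlt : l < e - 3 + delta).
  { destruct (Rlt_or_le l (e - 3 + delta)) as [h|h]; [exact h|].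
    assert ((e - 3 + delta) ^ 2 <= l ^ 2) by (apply pow_incr; lra).
    assert (0 <= (e - 3) * delta) by nra. nra. }
  unfold kaz_val. simpl. change (dimq q 1) with e. fold l.
  apply Rmax_lub_lt.
  - replace (1 - 3 / e + eps) with ((e - 3 + delta) / e) by (unfold delta; field; lra).
    apply Rmult_lt_compat_r; [apply Rinv_0_lt_compat; lra | exact hlt].
  - assert (3 / e <= 1) by (apply Rle_div_l; lra). lra.
Qed.

Lemma Rbar_le_glb (E : Rbar -> Prop) (l : Rbar) :
  (forall x, E x -> Rbar_le l x) -> Rbar_le l (Rbar_glb E).
Proof.
  intros hl. unfold Rbar_glb. destruct (Rbar_ex_glb E) as [g hg]. exact (proj2 hg l hl).
Qed.

Lemma Rbar_glb_eq_min (E : Rbar -> Prop) (l : Rbar) :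
  E l -> (forall x, E x -> Rbar_le l x) -> Rbar_glb E = l.
Proof.
  intros hEl hl. apply Rbar_is_glb_unique. split; [exact hl|].
  intros b hb. exact (hb l hEl).
Qed.

Lemma Rbar_glb_eq_approx (E : Rbar -> Prop) (l : R) :
  (forall x, E x -> Rbar_le l x) ->
  (forall eps, 0 < eps -> exists r, E (Finite r) /\ r < l + eps) ->
  Rbar_glb E = l.
Proof.
  intros hl happrox. apply Rbar_is_glb_unique. split; [exact hl|].
  intros b hb. destruct b as [b| |]; simpl; [| | exact I].
  - destruct (Rle_or_lt b l) as [h|h]; [exact h|].
    destruct (happrox (b - l)) as [r [hr hrb]]; [lra|].
    specialize (hb _ hr). simpl in hb. lra.
  - destruct (happrox 1 Rlt_0_1) as [r [hr _]]. exact (hb _ hr).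
Qed.

Lemma Kaz_X_ge (q : R) (X : list nat) : 0 < q -> q <= 1 -> generating X ->
  Rbar_le (1 - 3 / qnum q 3) (Kaz_X q X).
Proof.
  intros hq hq1 hX. apply Rbar_le_glb.
  intros x [xi [hxi ->]]. exact (kaz_val_ge q X xi hq hq1 hX hxi).
Qed.

Lemma Kaz_X_1 (q : R) : 0 < q -> q <= 1 -> Kaz_X q (1%nat :: nil) = 1 - 3 / qnum q 3.
Proof.
  intros hq hq1. apply Rbar_glb_eq_approx.
  - intros x [xi [hxi ->]]. exact (kaz_val_ge q _ xi hq hq1 generating_1 hxi).
  - intros eps heps. destruct (kaz_val_1_approx q eps hq heps) as [xi [hxi hlt]].
    exists (kaz_val q (1%nat :: nil) xi).
    split; [exists xi; split; [exact hxi | reflexivity] | exact hlt].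
Qed.

Theorem proposition5p5 (q : R) (hq0 : 0 < q) (hq1 : q <= 1) :
  Kaz_rho q = Finite (1 - 3 / qnum q 3) /\
  1 - 3 / qnum q 3 = 1 - 3 / (q ^ 2 + / q ^ 2 + 1).
Proof.
  split; [|rewrite qnum_3 by exact hq0; reflexivity].
  apply Rbar_glb_eq_min.
  - exists (1%nat :: nil). split; [exact generating_1 | symmetry; exact (Kaz_X_1 q hq0 hq1)].
  - intros x [X [hX ->]]. exact (Kaz_X_ge q X hq0 hq1 hX).
Qed.
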